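(* For every integer $n\ge0$, $B_{3,1}(n)=T(n)$. Here $B_{3,1}(n)$ is the number of partitions $\pi=(\pi_1\ge\pi_2\ge\dots\ge\pi_\ell)$ of $n$ such that $m_1(\pi)=0$, $m_j(\pi)+m_{j+1}(\pi)\le 2$ for all $j\ge1$, and for every $1\le j<\ell$, if $\pi_j-\pi_{j+1}\le1$ then $\pi_j+\pi_{j+1}\equiv 0\pmod 2$. And $T(n)$ is the number of partitions $\lambda$ of $n$ such that: $m_j(\lambda)\le 1$ for odd $j$; $m_j(\lambda)=0$ for odd $j<R_1(\lambda)+2$; $m_j(\lambda)\ge2$ for even $j$ with $0<j<R_1(\lambda)$; and no two consecutive integers both appear as parts of $\lambda$.
   Context: $m_j(\pi)$ is the multiplicity of $j$ as a part of $\pi$. $R_1(\lambda)$ is the largest part of $\lambda$ with multiplicity at least $2$, or $0$ if there is none. *)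

From mathcomp Require Import all_boot.
Set Implicit Arguments. Unset Strict Implicit. Unset Printing Implicit Defensive.

Definition is_partition (n : nat) (s : seq nat) : bool :=
  [&& sorted geq s, all (fun x => 0 < x) s & sumn s == n].

Fixpoint seqs_len (k m : nat) : seq (seq nat) :=
  if k is k'.+1 then [seq x :: t | x <- iota 0 m, t <- seqs_len k' m] else [:: [::]].

(* a finite list containing every partition of n (each at most once) *)
Definition cand (n : nat) : seq (seq nat) :=
  flatten [seq seqs_len k n.+1 | k <- iota 0 n.+1].

Definition count_partitions (P : seq nat -> bool) (n : nat) : nat :=
  count (fun s => is_partition n s && P s) (cand n).

Definition mult (s : seq nat) (j : nat) : nat := count_mem j s.

(* R_1: largest part with multiplicity >= 2, or 0 *)
Definition R1 (s : seq nat) : nat :=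
  \max_(j <- s | 2 <= mult s j) j.

Definition B31_cond (s : seq nat) : bool :=
  [&& mult s 1 == 0,
      all (fun j => mult s j + mult s j.+1 <= 2) (iota 1 (sumn s).+1) &
      all (fun i => (nth 0 s i - nth 0 s i.+1 <= 1) ==>
                    ~~ odd (nth 0 s i + nth 0 s i.+1))
          (iota 0 (size s).-1)].

Definition T_cond (s : seq nat) : bool :=
  [&& all (fun j => odd j ==> (mult s j <= 1)) s,
      all (fun j => (odd j && (j < R1 s + 2)) ==> (mult s j == 0)) (iota 0 (R1 s + 2)),
      all (fun j => (~~ odd j && (0 < j) && (j < R1 s)) ==> (2 <= mult s j)) (iota 0 (R1 s)) &
      all (fun j => mult s j.+1 == 0) s].

Definition B31 (n : nat) : nat := count_partitions B31_cond n.
Definition T (n : nat) : nat := count_partitions T_cond n.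

From mathcomp Require Import all_boot zify.
Set Implicit Arguments. Unset Strict Implicit. Unset Printing Implicit Defensive.

(* A partition counted by B_{3,1} has parts >= 2, and its parity and
   multiplicity conditions force it to be a "block chain": a list of blocks,
   each a single part j or a pair j, j, every later part being at most j - 2.
   phi works from the smallest block upwards: a single block j is kept as a
   part j, while a pair block j, j adds 2 to every part built so far and pads
   with parts 2 up to exactly j parts ([raise]).

   Restating the
   T conditions in Prop form, they are invariant under adding a single top
   part and under [raise], so phi lands in the T-partitions; it is onto since
   a T-partition either has a single top part or is the raise of a smaller
   T-partition by its repeated parts 2. *)

Lemma seqs_len_size k m s : s \in seqs_len k m -> size s = k.
Proof.
elim: k s => [|k IH] s /=; first by rewrite inE => /eqP ->.
by case/allpairsPdep => x [t [_ /IH Ht ->]] /=; rewrite Ht.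
Qed.

Lemma seqs_len_uniq k m : uniq (seqs_len k m).
Proof.
elim: k => [|k IH] //=; apply: allpairs_uniq => //; first exact: iota_uniq.
by move=> [x1 t1] [x2 t2] _ _ /= [-> ->].
Qed.

Lemma seqs_len_mem s m : all (fun x => x < m) s -> s \in seqs_len (size s) m.
Proof.
elim: s => [|x s IH] //= /andP [x_lt s_lt].
by apply/allpairsPdep; exists x, s; rewrite mem_iota IH.
Qed.

(* Candidate lists of distinct lengths are disjoint, so [cand n] has no
   duplicates. *)
Lemma seqs_len_flatten_uniq ks m :
  uniq ks -> uniq (flatten [seq seqs_len k m | k <- ks]).
Proof.
elim: ks => [|k ks IH] //= /andP [k_ks /IH uniq_ks].
rewrite cat_uniq seqs_len_uniq uniq_ks andbT /=.
apply/hasPn => s /flattenP [l /mapP [k' k'_ks ->]] /seqs_len_size size_s.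
by apply/negP => /seqs_len_size; rewrite size_s => Ek; rewrite -Ek k'_ks in k_ks.
Qed.

Lemma cand_uniq n : uniq (cand n).
Proof. exact/seqs_len_flatten_uniq/iota_uniq. Qed.

Lemma partition_bounds n s : is_partition n s ->
  all (fun x => x < n.+1) s /\ size s <= n.
Proof.
case/and3P => _ + /eqP <-; elim: s => [|x s IH] //= /andP [x_gt0 /IH [Hs Hsize]].
split; last by lia.
rewrite ltnS leq_addr /=; apply: sub_all Hs => y /=; lia.
Qed.

Lemma cand_mem n s : is_partition n s -> s \in cand n.
Proof.
move=> /partition_bounds [parts_lt size_le].
apply/flattenP; exists (seqs_len (size s) n.+1); last exact: seqs_len_mem.
by apply/mapP; exists (size s); rewrite // mem_iota.
Qed.

Lemma count_partitions_bij (P Q : seq nat -> bool) (g : seq nat -> seq nat) n :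
  (forall s, is_partition n s -> P s -> is_partition n (g s) && Q (g s)) ->
  {in [pred s | is_partition n s && P s] &, injective g} ->
  (forall t, is_partition n t -> Q t -> exists2 s, is_partition n s && P s & g s = t) ->
  count_partitions P n = count_partitions Q n.
Proof.
move=> g_into g_inj g_onto; rewrite /count_partitions -!size_filter -(size_map g).
apply/perm_size/uniq_perm; rewrite ?filter_uniq ?cand_uniq //.
  rewrite map_inj_in_uniq ?filter_uniq ?cand_uniq // => s1 s2.
  by rewrite !mem_filter => /andP [good1 _] /andP [good2 _]; apply: g_inj.
move=> t; apply/mapP/idP => [[s] | ].
  rewrite !mem_filter => /andP [/andP [Hs HP] _] ->.
  by have /andP [Ht HQ] := g_into s Hs HP; rewrite Ht HQ cand_mem.
rewrite mem_filter => /andP [/andP [Ht HQ] _].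
have [s /andP [Hs HP] <-] := g_onto t Ht HQ.
by exists s; rewrite // mem_filter Hs HP cand_mem.
Qed.

Lemma geq_trans : transitive geq.
Proof. exact: rev_trans leq_trans. Qed.

Lemma ge2_partition t : sorted geq t -> all (leq 2) t -> is_partition (sumn t) t.
Proof.
move=> sorted_t t_ge2; rewrite /is_partition sorted_t eqxx andbT.
by apply: sub_all t_ge2 => x; exact: ltnW.
Qed.

Definition below (j : nat) (s : seq nat) : bool := all (fun x => x + 2 <= j) s.

Lemma below_head j s : 2 <= j -> below j s -> head 0 s + 2 <= j.
Proof. by case: s => [|x s] //= j_ge2 /andP []. Qed.

Lemma sorted_below j s : sorted geq s -> head 0 s + 2 <= j -> below j s.
Proof.
case: s => [|x s] //=; rewrite (path_sortedE geq_trans) => /andP [x_ge _] xj.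
by rewrite /= xj; apply: sub_all x_ge => y /=; lia.
Qed.

Lemma below_count j s y : below j s -> j <= y.+1 -> count_mem y s = 0.
Proof. by move=> /allP js jy; apply/count_memPn/negP => /js; lia. Qed.

(* The shape of the partitions counted by B_{3,1}: a list of blocks [j] or
   [j; j] with j >= 2, each block exceeding every later part by at least 2. *)
Inductive block_chain : seq nat -> Prop :=
| chain_nil : block_chain [::]
| chain_single j s : 2 <= j -> below j s -> block_chain s -> block_chain (j :: s)
| chain_double j s : 2 <= j -> below j s -> block_chain s -> block_chain [:: j, j & s].

Lemma chain_ge2 s : block_chain s -> all (leq 2) s.
Proof. by elim=> //= j s' -> _ _ ->. Qed.

Lemma chain_sorted s : block_chain s -> sorted geq s.
Proof.
have below_le j s' : below j s' -> all (geq j) s' by apply: sub_all => x /=; lia.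
by elim=> [|j s' _ /below_le Hj _ IH|j s' _ /below_le Hj _ IH] //=;
  rewrite ?leqnn (path_sortedE geq_trans) Hj IH.
Qed.

Definition mult_bounded (s : seq nat) : Prop :=
  forall j : nat, count_mem j s + count_mem j.+1 s <= 2.

Lemma below_count_pair j s x :
  below j s -> (j == x) || (j == x.+1) -> count_mem x s + count_mem x.+1 s = 0.
Proof. by move=> js /orP [] /eqP jx; rewrite !(below_count js) //; lia. Qed.

Lemma chain_mult_bounded s : block_chain s -> mult_bounded s.
Proof.
elim=> [|j s' _ js' _ IH|j s' _ js' _ IH] x //=;
  have [near_j | far_j] := boolP ((j == x) || (j == x.+1)).
all: try by move: far_j; rewrite negb_or => /andP [/negbTE -> /negbTE ->]; exact: IH.
all: have := below_count_pair js' near_j.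
all: by move: near_j; case: eqP; case: eqP => //=; lia.
Qed.

Definition close_even (a b : nat) : bool := (a - b <= 1) ==> ~~ odd (a + b).

Lemma adjacent_pairsE s :
  all (fun i => (nth 0 s i - nth 0 s i.+1 <= 1) ==> ~~ odd (nth 0 s i + nth 0 s i.+1))
      (iota 0 (size s).-1) = sorted close_even s.
Proof.
apply/allP/(sortedP 0) => H i; last by rewrite mem_iota => lt_i; apply: H; lia.
by move=> lt_i; apply: H; rewrite mem_iota; lia.
Qed.

Lemma close_even_gap a b : b <= a -> b != a -> close_even a b -> b + 2 <= a.
Proof.
move=> ba /eqP nba; case: (leqP (b + 2) a) => // a_small /implyP.
have -> : a = b.+1 by lia.
by rewrite subSnn addSn /= addnn odd_double => /(_ isT).
Qed.

Definition B31_shape (s : seq nat) : Prop :=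
  [/\ sorted geq s, all (leq 2) s, mult_bounded s & sorted close_even s].

Lemma B31_shape_behead x s : B31_shape (x :: s) -> B31_shape s.
Proof.
case=> /path_sorted sorted_s /andP [_ s_ge2] mult_xs /path_sorted close_s.
by split=> // j; have := mult_xs j; rewrite /=; lia.
Qed.

Lemma first_block j s : B31_shape (j :: s) ->
  below j s \/ exists2 s', s = j :: s' & below j s'.
Proof.
case: s => [|k s]; first by left.
case=> /= /andP [kj sorted_ks] _ mult_jks /andP [close_jk close_ks].
have [ekj | nkj] := eqVneq k j; last first.
  by left; apply: (@sorted_below j (k :: s)) => //; exact: close_even_gap.
subst k; right; exists s => //.
case: s sorted_ks close_ks mult_jks => [|l s] // /andP [lj sorted_ls] /andP [close_jl _].
move=> /(_ j); rewrite /= eqxx => mult_j.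
apply: (@sorted_below j (l :: s)) => //; apply: close_even_gap lj _ close_jl.
by apply/eqP => elj; move: mult_j; rewrite elj eqxx; lia.
Qed.

Lemma chain_of_shape s : B31_shape s -> block_chain s.
Proof.
have [n] := ubnP (size s); elim: n s => // n IH [|j s] /= size_lt shape_js.
  exact: chain_nil.
have [_ /andP [j_ge2 _] _ _] := shape_js.
have shape_s := B31_shape_behead shape_js.
have [js | [s' Es js']] := first_block shape_js.
  by apply: chain_single => //; apply: IH.
rewrite Es in shape_s size_lt *; apply: chain_double => //.
by apply: IH (B31_shape_behead shape_s); move: size_lt => /=; lia.
Qed.

Lemma mem_leq_sumn j s : j \in s -> j <= sumn s.
Proof. by elim: s => [|x s IH] //=; rewrite inE => /orP [/eqP ->|/IH]; lia. Qed.

(* The B_{3,1} conditions on a partition give its B31_shape: there is no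
   part 1, and the multiplicity bound only matters up to the size. *)
Lemma B31_cond_shape s :
  sorted geq s -> all (leq 1) s -> B31_cond s -> B31_shape s.
Proof.
rewrite /B31_cond /mult => sorted_s s_pos /and3P [/eqP no_one /allP mult_s close_s].
have s_ge2 : all (leq 2) s.
  apply/allP => x xs; have := allP s_pos x xs; case: x xs => [|[|x]] // xs _.
  by move/count_memPn: no_one; rewrite xs.
split => //; last by rewrite -adjacent_pairsE.
have count_big y : sumn s < y -> count_mem y s = 0.
  by move=> lt_y; apply/count_memPn/negP => /mem_leq_sumn; lia.
move=> j; have [-> | j_pos] := posnP j.
  have no_zero : count_mem 0 s = 0 by apply/count_memPn/negP => /(allP s_ge2).
  by rewrite no_zero no_one.
have [j_le | j_gt] := leqP j (sumn s); first by apply: mult_s; rewrite mem_iota; lia.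
by rewrite !count_big //; lia.
Qed.

Lemma below_path j s : below j s -> sorted close_even s -> path close_even j s.
Proof. by case: s => [|k s] //= /andP [kj _] ->; rewrite andbT; apply/implyP; lia. Qed.

Lemma chain_close_even s : block_chain s -> sorted close_even s.
Proof.
elim=> // j s' _ js' _ IH /=; first exact: below_path.
by rewrite /close_even subnn addnn odd_double below_path.
Qed.

Lemma chain_B31_cond s : block_chain s -> B31_cond s.
Proof.
move=> chain_s; rewrite /B31_cond /mult; apply/and3P; split.
- by apply/eqP/count_memPn/negP => /(allP (chain_ge2 chain_s)).
- by apply/allP => j _; exact: chain_mult_bounded.
- by rewrite adjacent_pairsE; exact: chain_close_even.
Qed.

Lemma B31_chain n s : is_partition n s -> B31_cond s -> block_chain s.
Proof. by case/and3P=> sorted_s s_pos _ /(B31_cond_shape sorted_s s_pos)/chain_of_shape. Qed.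

(* [raise c t]: add 2 to every part of t and append c parts equal to 2;
   this is the effect of a pair block. *)
Definition raise (c : nat) (t : seq nat) : seq nat := map (addn 2) t ++ nseq c 2.

Lemma size_raise c t : size (raise c t) = size t + c.
Proof. by rewrite size_cat size_map size_nseq. Qed.

Lemma sumn_raise c t : sumn (raise c t) = sumn t + 2 * size t + 2 * c.
Proof.
rewrite sumn_cat sumn_nseq; congr (_ + _).
by elim: t => //= x t ->; lia.
Qed.

Lemma sorted_raise c t : sorted geq t -> sorted geq (raise c t).
Proof.
move=> sorted_t; rewrite sorted_pairwise; last exact: geq_trans.
rewrite pairwise_cat -!sorted_pairwise; try exact: geq_trans.
apply/and3P; split.
- by apply/allrelP => x y /mapP [z _ ->] /nseqP [-> _]; lia.
- by apply: homo_sorted sorted_t => x y /=; lia.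
- by case: c => //= c; elim: c => //= c ->; rewrite leqnn.
Qed.

Fixpoint phi (s : seq nat) : seq nat :=
  match s with
  | [::] => [::]
  | [:: j] => [:: j]
  | j :: ((k :: s'') as s') =>
      if k == j then raise (j - size (phi s'')) (phi s'') else j :: phi s'
  end.

Lemma phi_single j s : below j s -> phi (j :: s) = j :: phi s.
Proof. by case: s => [|k s] //= /andP [kj _]; case: eqP => // ekj; lia. Qed.

Lemma phi_double j s : phi [:: j, j & s] = raise (j - size (phi s)) (phi s).
Proof. by rewrite /= eqxx. Qed.

Lemma phi_bounds s : block_chain s ->
  all (fun x => 2 <= x <= head 0 s) (phi s) /\ size (phi s) <= head 0 s.
Proof.
elim=> [|j s' j_ge2 js' _ [IHp IHs]|j s' j_ge2 js' _ [IHp IHs]] //;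
  have hs := below_head j_ge2 js'.
- rewrite phi_single //=; split; last lia.
  by rewrite leqnn j_ge2; apply: sub_all IHp => x /=; lia.
- rewrite phi_double size_raise; split; last by rewrite /=; lia.
  rewrite all_cat all_map all_nseq j_ge2 !orbT andbT.
  by apply: sub_all IHp => x /=; lia.
Qed.

Lemma phi_sumn s : block_chain s -> sumn (phi s) = sumn s.
Proof.
elim=> [|j s' _ js' _ IH|j s' j_ge2 js' chain_s' IH] //; first by rewrite phi_single //= IH.
have [_ size_le] := phi_bounds chain_s'; have := below_head j_ge2 js'.
by rewrite phi_double sumn_raise IH /=; lia.
Qed.

Lemma phi_sorted s : block_chain s -> sorted geq (phi s).
Proof.
elim=> [|j s' j_ge2 js' chain_s' IH|j s' _ _ _ IH] //; last by rewrite phi_double sorted_raise.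
rewrite phi_single //= path_min_sorted //.
have [bounds _] := phi_bounds chain_s'; have := below_head j_ge2 js'.
by move=> hs; apply: sub_all bounds => x /=; lia.
Qed.

Lemma phi_ge2 s : block_chain s -> all (leq 2) (phi s).
Proof. by case/phi_bounds => + _; apply: sub_all => x /andP []. Qed.

Lemma phi_single_tall j s : 2 <= j -> below j s -> block_chain s ->
  size (phi (j :: s)) < head 0 (phi (j :: s)).
Proof.
move=> j_ge2 js chain_s; have [_ size_le] := phi_bounds chain_s.
by rewrite phi_single //=; have := below_head j_ge2 js; lia.
Qed.

Lemma phi_double_wide j s : 2 <= j -> below j s -> block_chain s ->
  head 0 (phi [:: j, j & s]) <= size (phi [:: j, j & s]).
Proof.
move=> j_ge2 js chain_s; have [bounds size_le] := phi_bounds chain_s.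
have := below_head j_ge2 js; rewrite phi_double size_raise.
case: (phi s) bounds size_le => [|y t] /=; first by case: j j_ge2 {js} => [|[|j]].
by case/andP=> /andP [_ y_le] _; lia.
Qed.

Lemma phi_eq_nil s : block_chain s -> phi s = [::] -> s = [::].
Proof.
case=> [|j s' _ js' _|j s' j_ge2 _ _] //; first by rewrite phi_single.
by rewrite phi_double => /(congr1 size); rewrite size_raise /=; lia.
Qed.

Lemma raise_parts_gt2 c t : all (leq 2) t ->
  filter (fun x => 2 < x) (raise c t) = map (addn 2) t.
Proof.
move=> t_ge2; have no_twos : filter (fun x => 2 < x) (nseq c 2) = [::] by elim: c.
rewrite filter_cat no_twos cats0; apply/all_filterP.
by rewrite all_map; apply: sub_all t_ge2 => x /=; lia.
Qed.

(* phi is injective on block chains: the type of the first block is read off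
   the image, and the size and tail of a pair block are recovered from it. *)
Lemma phi_inj s1 s2 : block_chain s1 -> block_chain s2 -> phi s1 = phi s2 -> s1 = s2.
Proof.
move=> chain1; elim: chain1 s2 => [|j s js_ge2 js chain_s IH|j s j_ge2 js chain_s IH] s2.
- by move=> chain2 /esym /(phi_eq_nil chain2).
- case=> [|k s' k_ge2 ks' chain_s'|k s' k_ge2 ks' chain_s'].
  + by rewrite phi_single.
  + by rewrite !phi_single // => -[-> /(IH _ chain_s') ->].
  + move=> E; have := phi_single_tall js_ge2 js chain_s.
    by have := phi_double_wide k_ge2 ks' chain_s'; rewrite E; lia.
- case=> [|k s' k_ge2 ks' chain_s'|k s' k_ge2 ks' chain_s'].
  + by move/(phi_eq_nil (chain_double j_ge2 js chain_s)).
  + move=> E; have := phi_single_tall k_ge2 ks' chain_s'.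
    by have := phi_double_wide j_ge2 js chain_s; rewrite E; lia.
  + move=> E; have [_ size_le] := phi_bounds chain_s; have [_ size_le'] := phi_bounds chain_s'.
    have ejk : j = k.
      have := below_head j_ge2 js; have := below_head k_ge2 ks'.
      by move: (congr1 size E); rewrite !phi_double !size_raise; lia.
    move: (congr1 (filter (fun x => 2 < x)) E).
    rewrite !phi_double !raise_parts_gt2 ?phi_ge2 // => /(inj_map (@addnI 2)).
    by rewrite ejk => /(IH _ chain_s') ->.
Qed.

Lemma R1_spec s : R1 s = 0 \/ 2 <= count_mem (R1 s) s.
Proof.
rewrite /R1; apply: (big_ind (fun m => m = 0 \/ 2 <= mult s m)); [by left | | by right].
by move=> x y Hx Hy; rewrite /maxn; case: ltnP.
Qed.

Lemma R1_ub s j : 2 <= count_mem j s -> j <= R1 s.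
Proof.
move=> Hj; apply: (@leq_bigmax_seq _ _ (fun j => 2 <= mult s j) id j) => //.
by rewrite -has_pred1 has_count; lia.
Qed.

Lemma R1_unique s r :
  2 <= count_mem r s -> (forall j : nat, 2 <= count_mem j s -> j <= r) -> R1 s = r.
Proof.
move=> Hr r_max; have := R1_ub Hr; case: (R1_spec s) => [-> | /r_max]; lia.
Qed.

Lemma R1_repeated_eq s t :
  (forall j : nat, (2 <= count_mem j s) = (2 <= count_mem j t)) -> R1 s = R1 t.
Proof.
move=> same; case: (R1_spec t) => [t0 | Ht].
  by case: (R1_spec s) => [-> // | ]; rewrite same => /R1_ub; lia.
by apply: R1_unique; rewrite ?same // => j; rewrite same => /R1_ub.
Qed.

Definition T_prop (s : seq nat) : Prop :=
  [/\ forall j : nat, odd j -> count_mem j s <= 1,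
      forall j : nat, odd j -> j < R1 s + 2 -> count_mem j s = 0,
      forall j : nat, ~~ odd j -> 0 < j -> j < R1 s -> 2 <= count_mem j s &
      forall j : nat, j \in s -> count_mem j.+1 s = 0].

Lemma T_condP s : T_cond s <-> T_prop s.
Proof.
rewrite /T_cond /mult; split.
  case/and4P => /allP odd_once /allP odd_small /allP even_twice /allP no_succ; split.
  - move=> j odd_j; have [js | /count_memPn -> //] := boolP (j \in s).
    by have := odd_once j js; rewrite odd_j.
  - move=> j odd_j lt_j; apply/eqP.
    by have := odd_small j; rewrite mem_iota odd_j lt_j => /(_ isT).
  - move=> j even_j j_pos lt_j.
    by have := even_twice j; rewrite mem_iota even_j j_pos lt_j => /(_ isT).
  - by move=> j /no_succ /eqP.
case=> odd_once odd_small even_twice no_succ; apply/and4P; split; apply/allP => j.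
- by move=> _; apply/implyP => /odd_once.
- by move=> _; apply/implyP => /andP [odd_j lt_j]; rewrite odd_small.
- by move=> _; apply/implyP => /andP [/andP [even_j j_pos] lt_j]; exact: even_twice.
- by move/no_succ ->.
Qed.

Section RaiseCounts.
Variables (c : nat) (t : seq nat).

Lemma count_raise0 : count_mem 0 (raise c t) = 0.
Proof. by rewrite count_cat count_map count_nseq; elim: t. Qed.

Lemma count_raise1 : count_mem 1 (raise c t) = 0.
Proof. by rewrite count_cat count_map count_nseq; elim: t. Qed.

Lemma count_raiseSS y : count_mem y.+2 (raise c t) = count_mem y t + (y == 0) * c.
Proof.
rewrite count_cat count_map count_nseq /= eq_sym eqSS.
by congr (_ + _); apply: eq_count => x /=; rewrite add2n eqSS.
Qed.

Lemma mem_raise x : (x \in raise c t) = ((x == 2) && (0 < c)) || ((2 <= x) && (x - 2 \in t)).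
Proof.
rewrite mem_cat orbC mem_nseq andbC; congr orb; apply/mapP/andP => [[y yt ->] | [x_ge2 xt]].
  by rewrite leq_addr addKn.
by exists (x - 2); rewrite // subnKC.
Qed.

End RaiseCounts.

Section RaiseT.
Variables (c : nat) (t : seq nat).
Hypotheses (c_ge2 : 2 <= c) (t_pos : all (leq 1) t).
Let u := raise c t.

Lemma count0_pos : count_mem 0 t = 0.
Proof. by apply/count_memPn/negP => /(allP t_pos). Qed.

Lemma count_raise2 : count_mem 2 u = c.
Proof. by rewrite count_raiseSS count0_pos /= mul1n. Qed.

(* Raising t adds 2 to every part; the new parts 2 form a repeated part. *)
Lemma R1_raise : R1 u = (R1 t).+2.
Proof.
apply: R1_unique; first by rewrite count_raiseSS; case: (R1_spec t) => [-> | ] /=; lia.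
case=> [|[|[|y]]]; rewrite ?count_raise0 ?count_raise1 // count_raiseSS /= mul0n addn0.
by move/R1_ub.
Qed.

(* Each T condition at j + 2 for raise c t is the condition at j for t;
   the small cases are settled by c >= 2 and the absence of parts 0 and 1. *)
Lemma T_prop_raise : T_prop u <-> T_prop t.
Proof.
have shift y : 0 < y -> count_mem y.+2 u = count_mem y t.
  by move=> y_pos; rewrite count_raiseSS; case: y y_pos => //= y _; rewrite addn0.
have Rt := R1_raise.
split; case=> odd_once odd_small even_twice no_succ; split.
- by move=> y odd_y; rewrite -shift ?odd_gt0 // odd_once //= negbK.
- move=> y odd_y lt_y; rewrite -shift ?odd_gt0 //.
  by apply: odd_small; rewrite /= ?negbK //; lia.
- move=> y even_y y_pos lt_y; rewrite -shift //.
  by apply: even_twice; rewrite /= ?negbK //; lia.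
- move=> y yt; rewrite -shift //; apply: no_succ.
  by rewrite mem_raise /= subn2 /= yt orbT.
- case=> [|[|y]] //; first by rewrite count_raise1.
  by rewrite /= negbK => odd_y; rewrite shift ?odd_gt0 //; exact: odd_once.
- case=> [|[|y]] //; first by rewrite count_raise1.
  rewrite /= negbK Rt => odd_y lt_y.
  by rewrite shift ?odd_gt0 //; apply: odd_small => //; lia.
- case=> [|[|y]] //; rewrite /= negbK Rt => even_y _ lt_y.
  have [-> | y_pos] := posnP y; first by rewrite count_raise2.
  by rewrite shift //; apply: even_twice => //; lia.
- move=> x; rewrite mem_raise => /orP [/andP [/eqP -> _] | /andP [x_ge2 xt]].
    by rewrite (shift 1) //; apply: odd_small => //; lia.
  by rewrite -(subnKC x_ge2) /= count_raiseSS no_succ.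
Qed.

End RaiseT.

Section ConsT.
Variables (j : nat) (t : seq nat).
Hypotheses (j_ge2 : 2 <= j) (jt : below j t).

Lemma count_top : count_mem j t = 0.
Proof. exact: below_count jt _. Qed.

Lemma R1_cons : R1 (j :: t) = R1 t.
Proof.
apply: R1_repeated_eq => x /=; have [<- | //] := eqVneq j x.
by rewrite count_top.
Qed.

Lemma R1_below : R1 t + 2 <= j.
Proof.
case: (R1_spec t) => [-> // | rep].
have : R1 t \in t by rewrite -has_pred1 has_count; lia.
by move/(allP jt).
Qed.

Lemma T_prop_cons : T_prop (j :: t) <-> T_prop t.
Proof.
have Rlt := R1_below.
rewrite /T_prop R1_cons; split; case=> odd_once odd_small even_twice no_succ; split.
- by move=> x /odd_once /=; lia.
- by move=> x /odd_small H /H /=; lia.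
- by move=> x even_x x_pos lt_x; have := even_twice x even_x x_pos lt_x; rewrite /= gtn_eqF //; lia.
- by move=> x xt; have := no_succ x; rewrite inE xt orbT /= => /(_ isT); lia.
- move=> x odd_x /=; have [<- | _] := eqVneq j x; last exact: odd_once.
  by rewrite count_top.
- by move=> x odd_x lt_x /=; rewrite gtn_eqF ?odd_small //; lia.
- by move=> x even_x x_pos lt_x /=; rewrite gtn_eqF ?even_twice //; lia.
- move=> x; rewrite inE /= => /orP [/eqP -> | xt].
    by rewrite ltn_eqF // (below_count jt) //; lia.
  by rewrite gtn_eqF ?no_succ //; have := allP jt x xt; lia.
Qed.

End ConsT.

Lemma phi_below j s : 2 <= j -> below j s -> block_chain s -> below j (phi s).
Proof.
move=> j_ge2 js /phi_bounds [bounds _]; have := below_head j_ge2 js.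
by move=> hs; apply: sub_all bounds => x /andP [_]; lia.
Qed.

Lemma phi_T_prop s : block_chain s -> T_prop (phi s).
Proof.
elim=> [|j s' j_ge2 js' chain_s' IH|j s' j_ge2 js' chain_s' IH].
- by split=> // x; rewrite /R1 big_nil.
- by rewrite phi_single //; apply/T_prop_cons; rewrite // phi_below.
- rewrite phi_double; apply/T_prop_raise => //.
    by have [_] := phi_bounds chain_s'; have := below_head j_ge2 js'; lia.
  by apply: sub_all (phi_ge2 chain_s') => x /=; lia.
Qed.

(* The largest part of a chain is bounded by data of its image; this is
   what allows a block to be rebuilt above a preimage. *)
Lemma phi_head_bound s : block_chain s -> head 0 s <= maxn (size (phi s)) (head 0 (phi s)).
Proof.
case=> [|j s' _ js' _|j s' j_ge2 js' chain_s'] //; first by rewrite phi_single //= leq_maxr.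
have [_ size_le] := phi_bounds chain_s'; have := below_head j_ge2 js'.
by rewrite phi_double size_raise /=; lia.
Qed.

(* A T-partition has no part 1 (1 is odd and below R1 + 2). *)
Lemma T_prop_ge2 t : all (leq 1) t -> T_prop t -> all (leq 2) t.
Proof.
move=> t_pos [_ odd_small _ _].
have no_one : 1 \notin t by apply/count_memPn; apply: odd_small => //; lia.
apply/allP => x xt; have := allP t_pos x xt.
by case: x xt => [|[|x]] // xt _; rewrite xt in no_one.
Qed.

Lemma count_leqS r t :
  count (fun x => x <= r.+1) t = count (fun x => x <= r) t + count_mem r.+1 t.
Proof.
elim: t => [|a t IH] //=; rewrite IH.
by case: (ltngtP a r.+1) => [lt_a | lt_a | ->]; rewrite ?ltnn /=; lia.
Qed.

Lemma count_evens t m :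
  (forall k, 0 < k <= m.*2 -> ~~ odd k -> 2 <= count_mem k t) ->
  m.*2 <= count (fun x => x <= m.*2) t.
Proof.
elim: m => [|m IH] // twice; rewrite doubleS !count_leqS.
have := twice m.*2.+2; rewrite /= odd_double => /(_ ltac:(lia) isT).
by have := IH (fun k k_in => twice k ltac:(lia)); lia.
Qed.

(* In a T-partition the even parts 2, 4, ..., R1 are all repeated, so R1
   is at most the number of parts. *)
Lemma R1_le_size t : T_prop t -> R1 t <= size t.
Proof.
case=> odd_once _ even_twice _; case: (R1_spec t) => [-> // | rep].
have even_R : ~~ odd (R1 t) by apply/negP => /odd_once; lia.
have double_half : (R1 t)./2.*2 = R1 t by rewrite halfK (negbTE even_R) subn0.
have := @count_evens t (R1 t)./2; rewrite double_half => evens.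
apply: leq_trans (evens _) (count_size _ _) => k /andP [k_pos k_le] even_k.
have [-> // | k_ne] := eqVneq k (R1 t).
by apply: even_twice => //; move/eqP: k_ne; lia.
Qed.

Lemma sparse_size t : sorted geq t -> all (leq 2) t ->
  (forall j : nat, count_mem j t <= 1) ->
  (forall j : nat, j \in t -> count_mem j.+1 t = 0) -> 2 * size t <= head 0 t.
Proof.
elim: t => [|a t IH] //=; rewrite (path_sortedE geq_trans).
case/andP=> le_a sorted_t /andP [a_ge2 t_ge2] once no_succ.
have once_t x : count_mem x t <= 1 by have := once x; rewrite /=; lia.
have no_succ_t x : x \in t -> count_mem x.+1 t = 0.
  by move=> xt; have := no_succ x; rewrite inE xt orbT /= => /(_ isT); lia.
have := IH sorted_t t_ge2 once_t no_succ_t.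
case: t le_a {IH sorted_t t_ge2 once_t no_succ_t} once no_succ => [|b t] /=; first lia.
case/andP=> b_le _ /(_ a) once_a /(_ b); rewrite !inE eqxx orbT => /(_ isT) no_succ_b.
have b_ne : b != a by move: once_a; rewrite /= eqxx; case: eqP.
have succ_ne : a != b.+1 by move: no_succ_b; rewrite /=; case: eqP.
by move: b_ne succ_ne => /eqP b_ne /eqP succ_ne; lia.
Qed.

Definition lower (t : seq nat) : seq nat := [seq x - 2 | x <- t & 2 < x].

Lemma lower_pos t : all (leq 1) (lower t).
Proof. by rewrite all_map all_filter; apply/allP => x _; apply/implyP => /=; lia. Qed.

Lemma lower_sorted t : sorted geq t -> sorted geq (lower t).
Proof.
move=> sorted_t; rewrite sorted_map.
by apply: sub_sorted (sorted_filter geq_trans _ sorted_t) => x y /=; lia.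
Qed.

Lemma raise_decomp t : sorted geq t -> all (leq 2) t ->
  t = raise (count_mem 2 t) (lower t).
Proof.
rewrite /lower; elim: t => [|a t IH] //=; rewrite (path_sortedE geq_trans).
case/andP=> le_a sorted_t /andP [a_ge2 t_ge2]; rewrite {1}(IH sorted_t t_ge2).
case: (ltngtP 2 a) => [lt_a | lt_a | eq_a] /=; [ | lia | subst a].
  by rewrite add0n /raise /= subnKC // ltnW.
have -> : [seq x <- t | 2 < x] = [::].
  by rewrite (eq_in_filter (a2 := pred0)) ?filter_pred0 // => x /(allP le_a) /= x_le; rewrite ltnNge x_le.
by rewrite /raise /= add0n.
Qed.

Lemma T_prop_single h t : sorted geq (h :: t) -> T_prop (h :: t) ->
  size (h :: t) < h -> below h t.
Proof.
rewrite /= (path_sortedE geq_trans) => /andP [le_h _] T_ht /= lt_size.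
have [_ _ _ no_succ] := T_ht.
have h_once : count_mem h t = 0.
  apply/eqP; rewrite -leqn0 leqNgt; apply/negP => rep.
  have h_R1 : h <= R1 (h :: t) by apply: R1_ub; rewrite /= eqxx add1n ltnS.
  by have := R1_le_size T_ht; rewrite /=; lia.
rewrite /below; apply/allP => x xt /=; have x_le := allP le_h x xt.
have x_ne : x != h by apply: contraTneq xt => ->; apply/count_memPn.
have succ_ne : h != x.+1.
  by have := no_succ x; rewrite inE xt orbT /= => /(_ isT); case: eqP.
by move: x_ne succ_ne => /eqP x_ne /eqP succ_ne; lia.
Qed.

Lemma T_prop_double t : sorted geq t -> all (leq 2) t -> T_prop t ->
  head 0 t <= size t -> 0 < size t -> 2 <= count_mem 2 t.
Proof.
move=> sorted_t t_ge2 T_t le_size size_pos; have [odd_once _ even_twice no_succ] := T_t.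
have no_zero : count_mem 0 t = 0 by apply/count_memPn/negP => /(allP t_ge2).
have R_pos : 0 < R1 t.
  rewrite lt0n; apply/eqP => R0.
  have once (j : nat) : count_mem j t <= 1.
    rewrite leqNgt; apply/negP => rep; have := R1_ub rep; rewrite R0 leqn0 => /eqP j0.
    by move: rep; rewrite j0 no_zero.
  by have := sparse_size sorted_t t_ge2 once no_succ; lia.
case: (R1_spec t) => [R0 | rep]; first by rewrite R0 in R_pos.
have even_R : ~~ odd (R1 t) by apply/negP => /odd_once; lia.
have [R2 | R_ne2] := eqVneq (R1 t) 2; first by move: rep; rewrite R2.
have R_ne1 : R1 t != 1 by apply: contraNneq even_R => ->.
by apply: even_twice => //; move: R_ne1 R_ne2 => /eqP R_ne1 /eqP R_ne2; lia.
Qed.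

Lemma phi_cons_preimage h t s : 2 <= h -> below h t -> size (h :: t) < h ->
  block_chain s -> phi s = t -> exists2 s', block_chain s' & phi s' = h :: t.
Proof.
move=> h_ge2 ht lt_size chain_s phi_s.
have hs : below h s.
  apply: sorted_below (chain_sorted chain_s) _; have := phi_head_bound chain_s.
  by rewrite phi_s; have := below_head h_ge2 ht; move: lt_size => /=; lia.
by exists (h :: s); [exact: chain_single | rewrite phi_single ?phi_s].
Qed.

Lemma phi_raise_preimage c u s : 2 <= c -> head 0 (raise c u) <= size u + c ->
  block_chain s -> phi s = u -> exists2 s', block_chain s' & phi s' = raise c u.
Proof.
move=> c_ge2 head_le chain_s phi_s.
have hu : head 0 u + 2 <= size u + c by case: u head_le {phi_s} => [|y w] /=; lia.
have js : below (size u + c) s.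
  apply: sorted_below (chain_sorted chain_s) _; have := phi_head_bound chain_s.
  by rewrite phi_s; lia.
exists [:: size u + c, size u + c & s]; first by apply: chain_double => //; lia.
by rewrite phi_double phi_s addKn.
Qed.

(* phi is onto the T-partitions: remove the largest part or the block of 2s
   and extend a preimage of what remains. *)
Lemma phi_onto t : sorted geq t -> all (leq 1) t -> T_prop t ->
  exists2 s, block_chain s & phi s = t.
Proof.
have [n] := ubnP (size t); elim: n t => // n IH [|h t] size_lt sorted_ht ht_pos T_ht.
  by exists [::]; first exact: chain_nil.
have ht_ge2 := T_prop_ge2 ht_pos T_ht; have /andP [h_ge2 _] := ht_ge2.
have [lt_size | le_size] := ltnP (size (h :: t)) h.
  have ht := T_prop_single sorted_ht T_ht lt_size.
  have /andP [_ t_pos] := ht_pos; have T_t := (T_prop_cons h_ge2 ht).1 T_ht.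
  have [s chain_s phi_s] := IH t size_lt (path_sorted sorted_ht) t_pos T_t.
  exact: phi_cons_preimage h_ge2 ht lt_size chain_s phi_s.
have twos := T_prop_double sorted_ht ht_ge2 T_ht le_size isT.
have E := raise_decomp sorted_ht ht_ge2.
have T_u : T_prop (lower (h :: t)) by apply/(T_prop_raise twos (lower_pos _)); rewrite -E.
have size_u : size (lower (h :: t)) < n.
  by move: size_lt twos; rewrite {1}E size_raise /=; lia.
have [s chain_s phi_s] := IH _ size_u (lower_sorted sorted_ht) (lower_pos _) T_u.
by rewrite E; apply: phi_raise_preimage twos _ chain_s phi_s; rewrite -size_raise -E.
Qed.

Theorem theorem8 (n : nat) : B31 n = T n.
Proof.
apply: (count_partitions_bij (g := phi)).
- move=> s part_s /[dup] /(B31_chain part_s) chain_s _; case/and3P: part_s => _ _ /eqP <-.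
  by rewrite -(phi_sumn chain_s) ge2_partition ?phi_sorted ?phi_ge2 //=; apply/T_condP/phi_T_prop.
- move=> s1 s2 /andP [part1 B1] /andP [part2 B2].
  exact: phi_inj (B31_chain part1 B1) (B31_chain part2 B2).
- move=> t /and3P [sorted_t t_pos /eqP sum_t] /T_condP T_t.
  have [s chain_s phi_s] := phi_onto sorted_t t_pos T_t; exists s => //.
  rewrite -sum_t -phi_s (phi_sumn chain_s) ge2_partition ?chain_sorted ?chain_ge2 //=.
  exact: chain_B31_cond.
Qed.
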